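(* For $i=1,\dots,n$ let $X_i=\{0,1,\dots,m_i-1\}$ and let $P_i$ be an irreducible stochastic matrix on $X_i$ in detailed balance with a strictly positive probability measure $\sigma_i$. Let $\{1,\dots,n\}=C\sqcup N$ with $N\neq\emptyset$, $i_1=\min N$, $p^0_1,\dots,p^0_n>0$ summing to $1$, and assume $P_k$ is symmetric for every $k>i_1$. Let $P$ be the first crested product (see context). For each $i$ let $U_i$ be a real $m_i\times m_i$ matrix, $\Delta_i$ a real diagonal matrix and $D_i=\mathrm{diag}(\sigma_i(0),\dots,\sigma_i(m_i-1))$ such that $P_iU_i=U_i\Delta_i$, $U_i^TD_iU_i=I$, the column of $U_i$ indexed by $0$ is the all-ones vector and $(\Delta_i)_{00}=1$. Put $M_i=I_i^{\sigma_i\text{-norm}}$ if $i\in N$ and $M_i=U_i$ if $i\in C$, and $$U=\sum_{k=i_1+1}^nM_1\otimes\cdots\otimes M_{k-1}\otimes(U_k-A_k)\otimes A_{k+1}\otimes\cdots\otimes A_n+U_1\otimes\cdots\otimes U_{i_1}\otimes A_{i_1+1}\otimes\cdots\otimes A_n,$$ $$D=\bigotimes_{i=1}^nD_i,\qquad \Delta=\sum_{i\in C}p^0_i(I_1\otimes\cdots\otimes\Delta_i\otimes\cdots\otimes I_n)+\sum_{i\in N}p^0_i(I_1\otimes\cdots\otimes I_{i-1}\otimes\Delta_i\otimes J^{\mathrm{diag}}_{i+1}\otimes\cdots\otimes J^{\mathrm{diag}}_n).$$ Then $D$ is the diagonal matrix of a probability measure in detailed balance with $P$, $\Delta$ is diagonal,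 and $PU=U\Delta$, $U^TDU=I$.
   Context: The first crested product is $P=\sum_{i\in C}p^0_i(I_1\otimes\cdots\otimes I_{i-1}\otimes P_i\otimes I_{i+1}\otimes\cdots\otimes I_n)+\sum_{i\in N}p^0_i(I_1\otimes\cdots\otimes I_{i-1}\otimes P_i\otimes J_{i+1}\otimes\cdots\otimes J_n)$, where $I_i$ is the $m_i\times m_i$ identity and $J_i$ is the $m_i\times m_i$ matrix with all entries $1/m_i$. Kronecker products are indexed lexicographically: $(A\otimes B)_{(x,x'),(y,y')}=A_{x,y}B_{x',y'}$. $I_i^{\sigma_i\text{-norm}}=\mathrm{diag}(\sigma_i(0)^{-1/2},\dots,\sigma_i(m_i-1)^{-1/2})$; $A_i$ is the $m_i\times m_i$ matrix whose column $0$ has all entries $1$ and all other entries $0$; $J^{\mathrm{diag}}_i=\mathrm{diag}(1,0,\dots,0)$ of size $m_i$. Detailed balance: $\sigma_i(x)p_i(x,y)=\sigma_i(y)p_i(y,x)$. *)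

From HB Require Import structures.
From mathcomp Require Import all_boot all_order all_algebra.
Set Implicit Arguments. Unset Strict Implicit. Unset Printing Implicit Defensive.
Import Order.TTheory GRing.Theory Num.Theory.
Local Open Scope ring_scope.

Definition stochastic (R : numDomainType) (k : nat) (A : 'M[R]_k) : Prop :=
  (forall x y, 0 <= A x y) /\ (forall x, \sum_y A x y = 1).

Definition irreducible (R : numDomainType) (k : nat) (A : 'M[R]_k.+1) : Prop :=
  forall x y, exists t : nat, 0 < (A ^+ t) x y.

Definition detailed_balance (R : numDomainType) (k : nat)
  (s : 'I_k -> R) (A : 'M[R]_k) : Prop :=
  forall x y, s x * A x y = s y * A y x.

(* X_i = {0,...,(m i)} has (m i).+1 elements. *)
Definition prodsp (n : nat) (m : 'I_n -> nat) : finType :=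
  {dffun forall i : 'I_n, 'I_(m i).+1}.

Definition fmat (R : Type) (X : finType) := X -> X -> R.

Definition fmmul (R : pzRingType) (X : finType) (A B : fmat R X) : fmat R X :=
  fun x y => \sum_(z : X) A x z * B z y.
Definition fmtr (R : Type) (X : finType) (A : fmat R X) : fmat R X :=
  fun x y => A y x.
Definition fmid (R : pzRingType) (X : finType) : fmat R X :=
  fun x y => (x == y)%:R.

(* Kronecker product A_1 (x) ... (x) A_n; entry ((x_1..x_n),(y_1..y_n)) is
   prod_i (A_i)_{x_i,y_i}, i.e. the lexicographic Kronecker product up to the
   canonical relabelling of indices. *)
Definition kron (R : pzRingType) (n : nat) (m : 'I_n -> nat)
  (A : forall i : 'I_n, 'M[R]_((m i).+1)) : fmat R (prodsp m) :=
  fun x y => \prod_(i < n) A i (x i) (y i).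

Definition Imx (R : pzRingType) (k : nat) : 'M[R]_k := 1%:M.
Definition Jmx (R : fieldType) (k : nat) : 'M[R]_k := const_mx (k%:R^-1).
Definition Amx (R : pzRingType) (k : nat) : 'M[R]_k.+1 :=
  \matrix_(x, y) (y == ord0)%:R.
Definition Jdiag (R : pzRingType) (k : nat) : 'M[R]_k.+1 :=
  \matrix_(x, y) ((x == ord0) && (y == ord0))%:R.
Definition signorm (R : rcfType) (k : nat) (s : 'I_k -> R) : 'M[R]_k :=
  diag_mx (\row_x (Num.sqrt (s x))^-1).
Definition diagm (R : pzRingType) (k : nat) (s : 'I_k -> R) : 'M[R]_k :=
  diag_mx (\row_x s x).

(* C = complement of N. *)
Definition crested1 (R : fieldType) (n : nat) (m : 'I_n -> nat)
  (N : {set 'I_n}) (p0 : 'I_n -> R) (P : forall i : 'I_n, 'M[R]_((m i).+1))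
  : fmat R (prodsp m) :=
  fun x y =>
    \sum_(i < n | i \notin N)
        p0 i * kron (fun j => if j == i then P j else @Imx R (m j).+1) x y
  + \sum_(i < n | i \in N)
        p0 i * kron (fun j => if (j < i)%N then @Imx R (m j).+1
                              else if j == i then P j else @Jmx R (m j).+1) x y.

Definition crestedDelta (R : pzRingType) (n : nat) (m : 'I_n -> nat)
  (N : {set 'I_n}) (p0 : 'I_n -> R) (Dl : forall i : 'I_n, 'M[R]_((m i).+1))
  : fmat R (prodsp m) :=
  fun x y =>
    \sum_(i < n | i \notin N)
        p0 i * kron (fun j => if j == i then Dl j else @Imx R (m j).+1) x y
  + \sum_(i < n | i \in N)
        p0 i * kron (fun j => if (j < i)%N then @Imx R (m j).+1
                              else if j == i then Dl j else @Jdiag R (m j)) x y.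

Definition Mfac (R : rcfType) (n : nat) (m : 'I_n -> nat)
  (N : {set 'I_n}) (sigma : forall i : 'I_n, 'I_(m i).+1 -> R)
  (U : forall i : 'I_n, 'M[R]_((m i).+1)) (j : 'I_n) : 'M[R]_((m j).+1) :=
  if j \in N then signorm (sigma j) else U j.

Definition crestedU (R : rcfType) (n : nat) (m : 'I_n -> nat)
  (N : {set 'I_n}) (i1 : 'I_n) (sigma : forall i : 'I_n, 'I_(m i).+1 -> R)
  (U : forall i : 'I_n, 'M[R]_((m i).+1)) : fmat R (prodsp m) :=
  fun x y =>
    \sum_(k < n | (i1 < k)%N)
        kron (fun j => if (j < k)%N then Mfac N sigma U j
                       else if j == k then U j - @Amx R (m j) else @Amx R (m j)) x y
  + kron (fun j => if (j <= i1)%N then U j else @Amx R (m j)) x y.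

Definition crestedD (R : pzRingType) (n : nat) (m : 'I_n -> nat)
  (sigma : forall i : 'I_n, 'I_(m i).+1 -> R) : fmat R (prodsp m) :=
  kron (fun i => diagm (sigma i)).

(* Every summand of P, U and Delta is a Kronecker product, and Kronecker products
   multiply factorwise.  Pair a summand of P with a summand of U: either every factor
   satisfies (factor of P) (factor of U) = (factor of U) (factor of Delta), or both
   products have a vanishing factor.  The latter happens for the summand i in N of P
   and the summand k > i of U, since J_k (U_k - A_k) = 0 (sigma_k is uniform for
   k > i1, P_k being symmetric) and (U_k - A_k) J^diag_k = 0 (the first column of
   U_k is 1).  Detailed balance holds summand by summand.  Distinct summands of U
   are D-orthogonal, and their D-Gram matrices telescope to the identity: with F_t
   the Kronecker product of t identities followed by copies of J^diag, the summand
   indexed by k contributes F_(k+1) - F_k and the last summand F_(i1+1). *)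

From HB Require Import structures.
From mathcomp Require Import all_boot all_order all_algebra.
From mathcomp Require Import reals.
From mathcomp Require Import ring.
From Stdlib Require Import FunctionalExtensionality.

Set Implicit Arguments.
Unset Strict Implicit.
Unset Printing Implicit Defensive.
Import Order.TTheory GRing.Theory Num.Theory.
Local Open Scope ring_scope.

Lemma bigA_distr_dffun (R : comPzRingType) (I : finType) (T : I -> finType)
    (F : forall i, T i -> R) :
  \prod_i \sum_(j : T i) F i j = \sum_(f : {dffun forall i, T i}) \prod_i F i (f i).
Proof.
rewrite (reindex (@dffun_of_fprod I T)) /=; last exact/onW_bij/dffun_of_fprod_bij.
transitivity (\sum_(t : fprod T) \prod_(i in I) [ffun j => F i j] (t i)); last first.
  by apply: eq_bigr => t _; apply: eq_bigr => i _; rewrite ffunE /dffun_of_fprod ffunE.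
rewrite big_fprod -(bigA_distr_big_dep _ (fun i j => untag 0 [ffun j => F i j] j)) /=.
apply: eq_bigr => i _; rewrite big_tag; apply: eq_bigr => j _.
by rewrite /untag; case: eqP => // e; rewrite ffunE.
Qed.

Lemma dffun_neq (I : finType) (T : I -> finType) (x y : {dffun forall i, T i}) :
  x != y -> exists i, x i != y i.
Proof.
move=> xy; apply/existsP; rewrite -negb_forall; apply: contra xy => /forallP xy.
by apply/eqP/ffunP => i; apply/eqP/xy.
Qed.

Lemma ord_ltn_eqF (n : nat) (a b : 'I_n) : (a < b)%N -> (a == b) = false.
Proof. by move=> ab; apply/eqP => eab; rewrite eab ltnn in ab. Qed.

Lemma ord_gtn_eqF (n : nat) (a b : 'I_n) : (b < a)%N -> (a == b) = false.
Proof. by move=> ba; apply/eqP => eab; rewrite eab ltnn in ba. Qed.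

Lemma ord_ltn_neq (n : nat) (a b : 'I_n) : a != b -> (a <= b)%N -> (a < b)%N.
Proof. by move=> ab le_ab; rewrite ltn_neqAle le_ab andbT. Qed.

Lemma sum_option (V : nmodType) (I : finType) (Q : pred I) (F : option I -> V) :
  \sum_(o | if o is Some i then Q i else true) F o = F None + \sum_(i | Q i) F (Some i).
Proof.
rewrite (bigD1 None) //=; congr (_ + _).
rewrite (reindex_omap (@Some I) id) /=; last by case.
by apply: eq_bigl => i; rewrite eqxx !andbT.
Qed.

Lemma big_distrlr_sum (R : comPzRingType) (X I J : finType) (PI : pred I) (PJ : pred J)
    (a : I -> X -> R) (b : J -> X -> R) :
  \sum_z (\sum_(i | PI i) a i z) * (\sum_(j | PJ j) b j z) =
  \sum_(i | PI i) \sum_(j | PJ j) \sum_z a i z * b j z.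
Proof.
under eq_bigr do rewrite big_distrlr.
by rewrite exchange_big; apply: eq_bigr => i _; rewrite exchange_big.
Qed.

Section Kronecker.

Variables (R : comPzRingType) (n : nat) (m : 'I_n -> nat).
Implicit Types (A B : forall i : 'I_n, 'M[R]_((m i).+1)) (x y : prodsp m).

Lemma eq_kron A B x y : (forall i, A i = B i) -> kron A x y = kron B x y.
Proof. by move=> AB; apply: eq_bigr => i _; rewrite AB. Qed.

Lemma kron_eq0 A x y (j : 'I_n) : A j (x j) (y j) = 0 -> kron A x y = 0.
Proof. by move=> Aj0; rewrite /kron (bigD1 j) //= Aj0 mul0r. Qed.

Lemma kron_offdiag A x y : (forall i, is_diag_mx (A i)) -> x != y -> kron A x y = 0.
Proof.
move=> Adiag /dffun_neq[j xyj]; apply: (kron_eq0 (j := j)).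
by move/is_diag_mxP: (Adiag j); apply.
Qed.

Lemma kron1 x y : kron (fun i => 1%:M : 'M[R]_((m i).+1)) x y = (x == y)%:R.
Proof.
have [<-|xy] := eqVneq x y; last by apply: kron_offdiag => // i; apply: scalar_mx_is_diag.
by apply: big1 => i _; rewrite mxE eqxx.
Qed.

Lemma kron_trmx A x y : kron A y x = kron (fun i => (A i)^T) x y.
Proof. by apply: eq_bigr => i _; rewrite mxE. Qed.

Lemma kron_mulmx A B x y :
  \sum_z kron A x z * kron B z y = kron (fun i => A i *m B i) x y.
Proof.
under eq_bigr do rewrite -big_split /=.
rewrite /kron (eq_bigr (fun i => \sum_j A i (x i) j * B i j (y i))) => [|i _].
  exact/esym/bigA_distr_dffun.
by rewrite mxE.
Qed.

Lemma kron_factorB (F G H : forall i : 'I_n, 'M[R]_((m i).+1)) (k : 'I_n) x y :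
  kron (fun j => if j == k then F j - G j else H j) x y =
  kron (fun j => if j == k then F j else H j) x y
  - kron (fun j => if j == k then G j else H j) x y.
Proof.
have rest T : \prod_(j < n | j != k) (if j == k then T j else H j) (x j) (y j) =
              \prod_(j < n | j != k) H j (x j) (y j).
  by apply: eq_bigr => j /negPf ->.
rewrite /kron (bigD1 k) // [X in _ = X - _](bigD1 k) // [X in _ = _ - X](bigD1 k) //=.
by rewrite !eqxx !rest !mxE mulrBl.
Qed.

End Kronecker.

Lemma kron_detailed_balance (R : numDomainType) (n : nat) (m : 'I_n -> nat)
    (sigma : forall i : 'I_n, 'I_(m i).+1 -> R) (A : forall i : 'I_n, 'M[R]_((m i).+1))
    (x y : prodsp m) :
  (forall i, detailed_balance (sigma i) (A i)) ->
  (\prod_i sigma i (x i)) * kron A x y = (\prod_i sigma i (y i)) * kron A y x.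
Proof. by move=> db; rewrite /kron -!big_split; apply: eq_bigr => i _; apply: db. Qed.

Section RingFactors.

Variables (R : pzRingType) (k : nat).
Local Notation A := (Amx R k).

Lemma Jdiag_is_diag : is_diag_mx (Jdiag R k).
Proof.
apply/is_diag_mxP => a b ab; rewrite mxE.
by case: eqP => [a0|//]; case: eqP => [b0|//]; rewrite a0 b0 eqxx in ab.
Qed.

Lemma Amx_mul_diag (D : 'M[R]_k.+1) : is_diag_mx D -> D ord0 ord0 = 1 -> A *m D = A.
Proof.
move=> /is_diag_mxP Ddiag D00; apply/matrixP=> a b; rewrite !mxE.
rewrite (bigD1 ord0) //= big1 => [|z /negPf z0]; last by rewrite mxE z0 mul0r.
rewrite !mxE eqxx mul1r addr0.
by have [->|b0] := eqVneq b ord0; rewrite ?D00 // Ddiag // eq_sym.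
Qed.

Lemma Amx_mulJdiag : A *m Jdiag R k = A.
Proof. by rewrite Amx_mul_diag ?Jdiag_is_diag // mxE eqxx. Qed.

Lemma subAmx_mulJdiag (U : 'M[R]_k.+1) :
  (forall x, U x ord0 = 1) -> (U - A) *m Jdiag R k = 0.
Proof.
move=> U0; apply/matrixP=> a b; rewrite !mxE.
rewrite (bigD1 ord0) //= big1 => [|z /negPf z0]; last by rewrite !mxE z0 mulr0.
by rewrite !mxE U0 eqxx subrr mul0r addr0.
Qed.

End RingFactors.

Section MarkovFactors.

Variables (R : numDomainType) (k : nat).
Local Notation A := (Amx R k).

Lemma stochastic_mulmxA (P : 'M[R]_k.+1) : stochastic P -> P *m A = A.
Proof.
move=> [_ Psum]; apply/matrixP=> a b; rewrite !mxE.
under eq_bigr do rewrite mxE.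
by rewrite -big_distrl /= Psum mul1r.
Qed.

Lemma stochastic_eigen_subA (P U D : 'M[R]_k.+1) :
  stochastic P -> is_diag_mx D -> D ord0 ord0 = 1 -> P *m U = U *m D ->
  P *m (U - A) = (U - A) *m D.
Proof.
by move=> Pst Ddiag D00 PU; rewrite mulmxBr mulmxBl PU stochastic_mulmxA ?Amx_mul_diag.
Qed.

Lemma detailed_balance1 (s : 'I_k -> R) : detailed_balance s 1%:M.
Proof. by move=> a b; rewrite !mxE eq_sym; case: eqP => [->|]; rewrite ?mulr0. Qed.

Lemma detailed_balance_const (s : 'I_k -> R) (c : R) :
  (forall a b, s a = s b) -> detailed_balance s (const_mx c).
Proof. by move=> sc a b; rewrite !mxE (sc a b). Qed.

(* Symmetry and detailed balance make diag(s) commute with P, hence with P^t,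
   and irreducibility provides a t with (P^t) a b > 0. *)
Lemma sym_detailed_balance_const (s : 'I_k.+1 -> R) (P : 'M[R]_k.+1) :
  detailed_balance s P -> P^T = P -> irreducible P -> forall a b, s a = s b.
Proof.
move=> db Psym Pirr.
have sP : diagm s *m P = P *m diagm s.
  apply/matrixP=> a b; rewrite mul_diag_mx mul_mx_diag !mxE db.
  have -> : P b a = P^T a b by rewrite mxE.
  by rewrite Psym mulrC.
have sPt t : diagm s *m P ^+ t = P ^+ t *m diagm s.
  elim: t => [|t IH]; first by rewrite expr0 mulmx1 mul1mx.
  by rewrite exprS -mulmxE !mulmxA sP -!mulmxA IH.
move=> a b; have [t Pt_pos] := Pirr a b.
move/matrixP: (sPt t) => /(_ a b); rewrite mul_diag_mx mul_mx_diag !mxE mulrC.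
move/eqP; rewrite -subr_eq0 -mulrBr mulf_eq0 (gt_eqF Pt_pos) /= subr_eq0.
by move/eqP.
Qed.

End MarkovFactors.

Lemma Jmx_mulA (R : numFieldType) (k : nat) : Jmx R k.+1 *m Amx R k = Amx R k.
Proof.
apply/matrixP=> a b; rewrite !mxE.
under eq_bigr do rewrite !mxE.
rewrite -big_distrl /= sumr_const card_ord -[_ *+ k.+1]mulr_natr.
by rewrite mulVf ?mul1r ?pnatr_eq0.
Qed.

Lemma gram_Amx_mx (R : comPzRingType) (k : nat) (s : 'I_k.+1 -> R) (X : 'M[R]_k.+1) :
  (Amx R k)^T *m diagm s *m X = \matrix_(a, b) ((a == ord0)%:R * \sum_z s z * X z b).
Proof.
apply/matrixP=> a b; rewrite !mxE mulr_sumr; apply: eq_bigr => z _.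
by rewrite mul_mx_diag !mxE mulrA [_ * s z]mulrC.
Qed.

Lemma gram_signorm (R : rcfType) (k : nat) (s : 'I_k -> R) :
  (forall x, 0 < s x) -> (signorm s)^T *m diagm s *m signorm s = 1%:M.
Proof.
move=> s_pos; rewrite /signorm /diagm tr_diag_mx !mulmx_diag.
apply/matrixP=> a b; rewrite !mxE; congr (_ *+ _).
have sqrt_pos : 0 < Num.sqrt (s a) by rewrite sqrtr_gt0.
rewrite [X in _ * X * _](esym (sqr_sqrtr (ltW (s_pos a)))) expr2.
field; exact: lt0r_neq0.
Qed.

Section OrthonormalEigenbasis.

Variables (R : numFieldType) (k : nat) (s : 'I_k.+1 -> R) (U : 'M[R]_k.+1).
Hypotheses (U_orth : U^T *m diagm s *m U = 1%:M) (U_col0 : forall x, U x ord0 = 1).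
Local Notation A := (Amx R k).
Local Notation D := (diagm s).

Lemma sum_diagm_col b : \sum_z s z * U z b = (b == ord0)%:R.
Proof.
move/matrixP: U_orth => /(_ ord0 b); rewrite !mxE eq_sym => <-.
by apply: eq_bigr => z _; rewrite mul_mx_diag !mxE U_col0 mul1r.
Qed.

Lemma sum_weights : \sum_z s z = 1.
Proof.
by rewrite -[RHS](sum_diagm_col ord0); apply: eq_bigr => z _; rewrite U_col0 mulr1.
Qed.

(* With uniform weights 1/(k+1), the columns of U other than the first sum to zero. *)
Lemma Jmx_mul_subA : (forall a b, s a = s b) -> Jmx R k.+1 *m (U - A) = 0.
Proof.
move=> s_const.
have s0_k : s ord0 * k.+1%:R = 1.
  rewrite -[RHS]sum_weights (eq_bigr _ (fun z _ => s_const z ord0)).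
  by rewrite sumr_const card_ord mulr_natr.
have colsum b : \sum_z U z b = (b == ord0)%:R * k.+1%:R.
  rewrite -sum_diagm_col.
  rewrite (eq_bigr _ (fun z _ => congr1 (fun c => c * U z b) (s_const z ord0))).
  by rewrite -mulr_sumr mulrAC s0_k mul1r.
apply/matrixP=> a b; rewrite !mxE.
under eq_bigr do rewrite !mxE.
by rewrite -mulr_sumr sumrB colsum sumr_const card_ord mulr_natr subrr mulr0.
Qed.

Lemma gram_Amx : A^T *m D *m A = Jdiag R k.
Proof.
rewrite gram_Amx_mx; apply/matrixP=> a b; rewrite !mxE.
under eq_bigr do rewrite mxE.
by rewrite -big_distrl /= sum_weights mul1r -natrM mulnb.
Qed.

Lemma gram_Amx_U : A^T *m D *m U = Jdiag R k.
Proof.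
by rewrite gram_Amx_mx; apply/matrixP=> a b; rewrite !mxE sum_diagm_col -natrM mulnb.
Qed.

Lemma gram_Amx_subA : A^T *m D *m (U - A) = 0.
Proof. by rewrite mulmxBr gram_Amx_U gram_Amx subrr. Qed.

Lemma gram_subA_Amx : (U - A)^T *m D *m A = 0.
Proof.
apply: trmx_inj; rewrite !trmx_mul trmxK /diagm tr_diag_mx mulmxA.
by rewrite gram_Amx_subA trmx0.
Qed.

Lemma gram_subA : (U - A)^T *m D *m (U - A) = 1%:M - Jdiag R k.
Proof.
by rewrite mulmxBr gram_subA_Amx subr0 linearB /= !mulmxBl U_orth gram_Amx_U.
Qed.

End OrthonormalEigenbasis.

Section CrestedD.

Variables (R : comPzRingType) (n : nat) (m : 'I_n -> nat).
Variable sigma : forall i : 'I_n, 'I_(m i).+1 -> R.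
Arguments sigma : clear implicits.

Lemma crestedD_diagE (x : prodsp m) : crestedD sigma x x = \prod_(i < n) sigma i (x i).
Proof. by apply: eq_bigr => i _; rewrite !mxE eqxx mulr1n. Qed.

Lemma crestedD_offdiag (x y : prodsp m) : x != y -> crestedD sigma x y = 0.
Proof. by apply: kron_offdiag => i; apply: diag_mx_is_diag. Qed.

Lemma sum_crestedD : \sum_x crestedD sigma x x = \prod_(i < n) \sum_a sigma i a.
Proof. by rewrite bigA_distr_dffun; apply: eq_bigr => x _; rewrite crestedD_diagE. Qed.

End CrestedD.

Section CrestedTerms.

Variables (R : rcfType) (n : nat) (m : 'I_n -> nat) (N : {set 'I_n}) (i1 : 'I_n).
Variables (p0 : 'I_n -> R) (sigma : forall i : 'I_n, 'I_(m i).+1 -> R).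
Arguments sigma : clear implicits.
Variables (P U Dl : forall i : 'I_n, 'M[R]_((m i).+1)).
Local Notation A j := (Amx R (m j)).
Local Notation Jd j := (Jdiag R (m j)).

Definition Pfac (i j : 'I_n) : 'M[R]_((m j).+1) :=
  if i \in N then (if (j < i)%N then 1%:M else if j == i then P j else Jmx R (m j).+1)
  else (if j == i then P j else 1%:M).

Definition Dfac (i j : 'I_n) : 'M[R]_((m j).+1) :=
  if i \in N then (if (j < i)%N then 1%:M else if j == i then Dl j else Jd j)
  else (if j == i then Dl j else 1%:M).

(* Summands of U: [Some k] is the summand indexed by k > i1, and [None] the last
   summand U_1 (x) ... (x) U_i1 (x) A (x) ... (x) A. *)
Definition Uindex (o : option 'I_n) : bool := if o is Some k then (i1 < k)%N else true.

Definition Uhead (o : option 'I_n) : nat := if o is Some k then k else i1.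

Definition Ufac (o : option 'I_n) (j : 'I_n) : 'M[R]_((m j).+1) :=
  match o with
  | Some k => if (j < k)%N then Mfac N sigma U j else if j == k then U j - A j else A j
  | None => if (j <= i1)%N then U j else A j
  end.

Definition Iprefix (t : nat) (j : 'I_n) : 'M[R]_((m j).+1) :=
  if (j < t)%N then 1%:M else Jd j.

(* The D-Gram matrix of the summand o of U. *)
Definition Gfac (o : option 'I_n) (j : 'I_n) : 'M[R]_((m j).+1) :=
  if o is Some k then (if j == k then 1%:M - Jd j else Iprefix k j) else Iprefix i1.+1 j.

Lemma crested1E (x y : prodsp m) :
  crested1 N p0 P x y = \sum_i p0 i * kron (Pfac i) x y.
Proof.
rewrite /crested1 [RHS](bigID (fun i => i \notin N)).
congr (_ + _); apply: eq_big => [i|i iN]; rewrite ?negbK //.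
  by congr (_ * _); apply: eq_kron => j; rewrite /Pfac (negPf iN).
by congr (_ * _); apply: eq_kron => j; rewrite /Pfac iN.
Qed.

Lemma crestedDeltaE (x y : prodsp m) :
  crestedDelta N p0 Dl x y = \sum_i p0 i * kron (Dfac i) x y.
Proof.
rewrite /crestedDelta [RHS](bigID (fun i => i \notin N)).
congr (_ + _); apply: eq_big => [i|i iN]; rewrite ?negbK //.
  by congr (_ * _); apply: eq_kron => j; rewrite /Dfac (negPf iN).
by congr (_ * _); apply: eq_kron => j; rewrite /Dfac iN.
Qed.

Lemma crestedUE (x y : prodsp m) :
  crestedU N i1 sigma U x y = \sum_(o | Uindex o) kron (Ufac o) x y.
Proof. by rewrite /Uindex sum_option addrC. Qed.

Lemma Ufac_tail o (j : 'I_n) : (Uhead o < j)%N -> Ufac o j = A j.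
Proof.
case: o => [k|] /= kj; last by rewrite leqNgt kj.
by rewrite ltnNge (ltnW kj) /= ord_gtn_eqF.
Qed.

Lemma Ufac_head k : Ufac (Some k) k = U k - A k.
Proof. by rewrite /= ltnn eqxx. Qed.

Hypothesis i1_min : forall j, j \in N -> (i1 <= j)%N.
Hypothesis sigma_unif : forall j : 'I_n, (i1 < j)%N -> forall a b, sigma j a = sigma j b.
Hypothesis P_db : forall j, detailed_balance (sigma j) (P j).

Lemma Pfac_detailed_balance i j : detailed_balance (sigma j) (Pfac i j).
Proof.
rewrite /Pfac; case: ifP => iN; last first.
  by case: eqP => [->|_]; [apply: P_db | apply: detailed_balance1].
case: ltnP => ij; first exact: detailed_balance1.
case: eqVneq => [->|ji]; first exact: P_db.
apply/detailed_balance_const/sigma_unif/(leq_ltn_trans (i1_min iN)).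
by rewrite ord_ltn_neq // eq_sym.
Qed.

Lemma crested1_detailed_balance x y :
  crestedD sigma x x * crested1 N p0 P x y = crestedD sigma y y * crested1 N p0 P y x.
Proof.
rewrite !crested1E !crestedD_diagE !mulr_sumr; apply: eq_bigr => i _.
by rewrite mulrCA [RHS]mulrCA kron_detailed_balance // => j; apply: Pfac_detailed_balance.
Qed.

Hypothesis Dl_diag : forall j, is_diag_mx (Dl j).

Lemma Dfac_is_diag i j : is_diag_mx (Dfac i j).
Proof.
by rewrite /Dfac; do ![case: ifP => _]; rewrite ?scalar_mx_is_diag ?Jdiag_is_diag ?Dl_diag.
Qed.

Lemma crestedDelta_offdiag x y : x != y -> crestedDelta N p0 Dl x y = 0.
Proof.
move=> xy; rewrite crestedDeltaE big1 // => i _.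
by rewrite kron_offdiag ?mulr0 // => j; apply: Dfac_is_diag.
Qed.

Hypothesis P_stoch : forall j, stochastic (P j).
Hypothesis Dl00 : forall j, Dl j ord0 ord0 = 1.
Hypothesis PU : forall j, P j *m U j = U j *m Dl j.
Hypothesis U_orth : forall j, (U j)^T *m diagm (sigma j) *m U j = 1%:M.
Hypothesis U_col0 : forall j x, U j x ord0 = 1.

Lemma eigen_Ufac o j :
  (j \notin N) || (Uhead o <= j)%N -> P j *m Ufac o j = Ufac o j *m Dl j.
Proof.
have eigen_A : P j *m A j = A j *m Dl j by rewrite stochastic_mulmxA ?Amx_mul_diag.
case: o => [k|] /= cond; last by case: ifP => _; [apply: PU | apply: eigen_A].
case: ltnP => jk.
  by move: cond; rewrite leqNgt jk orbF /Mfac => /negPf ->; apply: PU.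
by case: ifP => _; [apply: stochastic_eigen_subA | apply: eigen_A].
Qed.

Lemma kron_Pfac_Ufac i o x y : Uindex o ->
  kron (fun j => Pfac i j *m Ufac o j) x y = kron (fun j => Ufac o j *m Dfac i j) x y.
Proof.
move=> Uo; have comm1 j (X : 'M[R]_((m j).+1)) : 1%:M *m X = X *m 1%:M.
  by rewrite mul1mx mulmx1.
case iN : (i \in N); last first.
  apply: eq_kron => j; rewrite /Pfac /Dfac iN.
  by case: eqVneq => [->|_]; [apply: eigen_Ufac; rewrite iN | apply: comm1].
have [i_head|head_i] := ltnP i (Uhead o).
  case: o Uo i_head => [k|] /= i1k ik; last by rewrite ltnNge i1_min in ik.
  have Pik : Pfac i k = Jmx R (m k).+1 by rewrite /Pfac iN (leq_gtF (ltnW ik)) ord_gtn_eqF.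
  have Dik : Dfac i k = Jd k by rewrite /Dfac iN (leq_gtF (ltnW ik)) ord_gtn_eqF.
  have JUA := Jmx_mul_subA (U_orth k) (@U_col0 k) (sigma_unif i1k).
  rewrite (kron_eq0 (j := k)); last by rewrite ltnn eqxx Pik JUA mxE.
  by rewrite (kron_eq0 (j := k)) // ltnn eqxx Dik subAmx_mulJdiag ?mxE.
apply: eq_kron => j; rewrite /Pfac /Dfac iN.
case: ltnP => [_|ij]; first exact: comm1.
case: eqVneq => [->|ji]; first by apply: eigen_Ufac; rewrite head_i orbT.
have head_j : (Uhead o < j)%N by rewrite (leq_ltn_trans head_i) // ord_ltn_neq // eq_sym.
by rewrite Ufac_tail // Jmx_mulA Amx_mulJdiag.
Qed.

Hypothesis sigma_pos : forall j x, 0 < sigma j x.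

Lemma gram_Mfac j : (Mfac N sigma U j)^T *m diagm (sigma j) *m Mfac N sigma U j = 1%:M.
Proof. by rewrite /Mfac; case: ifP => _; [apply: gram_signorm | apply: U_orth]. Qed.

Lemma kron_gram_Ufac o o' x y : Uindex o -> Uindex o' ->
  kron (fun j => (Ufac o j)^T *m diagm (sigma j) *m Ufac o' j) x y =
  if o == o' then kron (Gfac o) x y else 0.
Proof.
have gram_A j := gram_Amx (U_orth j) (@U_col0 j).
have gram_A_UA j := gram_Amx_subA (U_orth j) (@U_col0 j).
have gram_UA_A j := gram_subA_Amx (U_orth j) (@U_col0 j).
have [<- _ _|oo'] := eqVneq o o'.
  apply: eq_kron => j; rewrite /Gfac /Iprefix.
  case: o => [k|] /=; last by rewrite ltnS; case: ifP => _; [apply: U_orth | apply: gram_A].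
  case: ltnP => jk; first by rewrite ord_ltn_eqF // gram_Mfac.
  by case: eqVneq => [->|_]; [apply: gram_subA | rewrite gram_A].
case: o o' oo' => [k|] [l|] // kl i1k i1l.
- have [lt_kl|lt_lk|eq_kl] := ltngtP k l; last by rewrite (val_inj eq_kl) eqxx in kl.
    by rewrite (kron_eq0 (j := l)) // (Ufac_tail (o := Some k)) // Ufac_head gram_A_UA mxE.
  by rewrite (kron_eq0 (j := k)) // (Ufac_tail (o := Some l)) // Ufac_head gram_UA_A mxE.
- by rewrite (kron_eq0 (j := k)) // (Ufac_tail (o := None)) // Ufac_head gram_UA_A mxE.
- by rewrite (kron_eq0 (j := l)) // (Ufac_tail (o := None)) // Ufac_head gram_A_UA mxE.
Qed.

Lemma kron_Gfac_Some k x y :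
  kron (Gfac (Some k)) x y = kron (Iprefix k.+1) x y - kron (Iprefix k) x y.
Proof.
rewrite /Gfac kron_factorB; congr (_ - _); apply: eq_kron => j; rewrite /Iprefix.
  case: eqVneq => [->|jk]; first by rewrite ltnSn.
  have jk' : j != k :> nat by [].
  by rewrite [in RHS]ltnS [in RHS]leq_eqVlt (negPf jk').
by case: eqVneq => [->|//]; rewrite ltnn.
Qed.

Lemma sum_kron_Gfac x y : \sum_(o | Uindex o) kron (Gfac o) x y = (x == y)%:R.
Proof.
rewrite sum_option (eq_bigr _ (fun k _ => kron_Gfac_Some k x y)).
pose F t := kron (Iprefix t) x y.
rewrite (eq_bigl (fun k : 'I_n => true && (i1.+1 <= k)%N)) //.
rewrite -(big_geq_mkord _ _ xpredT (fun t => F t.+1 - F t)).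
rewrite telescope_sumr // addrC subrK -kron1.
by apply: eq_kron => j; rewrite /Iprefix ltn_ord.
Qed.

Lemma crested1_eigen :
  fmmul (crested1 N p0 P) (crestedU N i1 sigma U) =
  fmmul (crestedU N i1 sigma U) (crestedDelta N p0 Dl).
Proof.
apply: functional_extensionality => x; apply: functional_extensionality => y.
rewrite /fmmul; under eq_bigr do rewrite crested1E crestedUE.
under [RHS]eq_bigr do rewrite crestedUE crestedDeltaE.
rewrite !big_distrlr_sum [RHS]exchange_big; apply: eq_bigr => i _; apply: eq_bigr => o Uo.
under eq_bigr do rewrite -mulrA.
under [RHS]eq_bigr do rewrite mulrCA.
by rewrite -!mulr_sumr !kron_mulmx kron_Pfac_Ufac.
Qed.

Lemma crestedU_orthonormal :
  fmmul (fmmul (fmtr (crestedU N i1 sigma U)) (crestedD sigma)) (crestedU N i1 sigma U)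
  = @fmid R (prodsp m).
Proof.
apply: functional_extensionality => x; apply: functional_extensionality => y.
have UtD z : fmmul (fmtr (crestedU N i1 sigma U)) (crestedD sigma) x z =
    \sum_(o | Uindex o) kron (fun j => (Ufac o j)^T *m diagm (sigma j)) x z.
  rewrite /fmmul /fmtr; under eq_bigr do rewrite crestedUE big_distrl.
  rewrite exchange_big; apply: eq_bigr => o _.
  by under eq_bigr do rewrite kron_trmx; apply: kron_mulmx.
rewrite {1}/fmmul; under eq_bigr do rewrite UtD crestedUE.
rewrite big_distrlr_sum /fmid -sum_kron_Gfac; apply: eq_bigr => o Uo.
under eq_bigr => o' Uo' do rewrite kron_mulmx kron_gram_Ufac //.
rewrite (bigD1 o) //= eqxx big1 ?addr0 // => o' /andP[_ o'o].
by rewrite eq_sym (negPf o'o).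
Qed.

End CrestedTerms.

Theorem proposition4p5 (R : realType) (n : nat) (m : 'I_n -> nat)
  (P : forall i : 'I_n, 'M[R]_((m i).+1))
  (sigma : forall i : 'I_n, 'I_(m i).+1 -> R)
  (N : {set 'I_n}) (i1 : 'I_n) (p0 : 'I_n -> R)
  (U Dl : forall i : 'I_n, 'M[R]_((m i).+1)) :
  (forall i, stochastic (P i)) ->
  (forall i, irreducible (P i)) ->
  (forall i x, 0 < sigma i x) ->
  (forall i, \sum_x sigma i x = 1) ->
  (forall i, detailed_balance (sigma i) (P i)) ->
  i1 \in N -> (forall j, j \in N -> (i1 <= j)%N) ->
  (forall i, 0 < p0 i) -> \sum_i p0 i = 1 ->
  (forall k : 'I_n, (i1 < k)%N -> (P k)^T = P k) ->
  (forall i, is_diag_mx (Dl i)) ->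
  (forall i, P i *m U i = U i *m Dl i) ->
  (forall i, (U i)^T *m diagm (sigma i) *m U i = 1%:M) ->
  (forall i x, U i x ord0 = 1) ->
  (forall i, Dl i ord0 ord0 = 1) ->
  let Pc := crested1 N p0 P in
  let Uc := crestedU N i1 sigma U in
  let Dc := crestedD sigma in
  let Deltac := crestedDelta N p0 Dl in
  ((* D is the diagonal matrix of a probability measure ... *)
      (forall x y, x != y -> Dc x y = 0) /\
      (forall x, 0 <= Dc x x) /\
      \sum_x Dc x x = 1 /\
      (* ... in detailed balance with P *)
      (forall x y, Dc x x * Pc x y = Dc y y * Pc y x) /\
      (* Delta is diagonal *)
      (forall x y, x != y -> Deltac x y = 0) /\
      fmmul Pc Uc = fmmul Uc Deltac /\
      fmmul (fmmul (fmtr Uc) Dc) Uc = @fmid R (prodsp m)).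
Proof.
move=> P_stoch P_irr sigma_pos sigma_sum P_db _ i1_min _ _ P_sym Dl_diag PU U_orth U_col0 Dl00.
have sigma_unif (k : 'I_n) : (i1 < k)%N -> forall a b, sigma k a = sigma k b.
  by move=> i1k; apply: sym_detailed_balance_const (P_db k) (P_sym k i1k) (P_irr k).
move=> Pc Uc Dc Deltac.
split; first exact: crestedD_offdiag.
split; first by move=> x; rewrite /Dc crestedD_diagE; apply/prodr_ge0 => i _; apply/ltW.
split; first by rewrite /Dc sum_crestedD; apply: big1.
split; first exact: crested1_detailed_balance i1_min sigma_unif P_db.
split; first exact: crestedDelta_offdiag.
split; first exact: crested1_eigen.
exact: crestedU_orthonormal.
Qed.
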